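(* Let $X$ be a rearrangement invariant space on $\mathbb N$ with the Fatou property. Then for every $f\in X$, $$\operatorname{dist}_X(f^*,X_a)=\operatorname{dist}_X(f,X_a).$$
   Context: A rearrangement invariant space on $\mathbb N$ (counting measure) is a Banach space $X$ of real sequences such that $|x|\le|y|$ coordinatewise, $y\in X$ imply $x\in X$, $\|x\|_X\le\|y\|_X$, containing a sequence with all coordinates nonzero, and such that whenever $x\in X$ and $y$ has the same distribution function as $x$ ($d_x(\lambda)=\#\{n:|x_n|>\lambda\}$), then $y\in X$ and $\|y\|_X=\|x\|_X$. Fatou property: if $0\le x^{(n)}\uparrow x$ coordinatewise, $x^{(n)}\in X$, $\sup_n\|x^{(n)}\|_X<\infty$, then $x\in X$ and $\|x^{(n)}\|_X\uparrow\|x\|_X$. The non-increasing rearrangement is $f^*=(f^*_n)$ with $f^*_n=\inf\{\lambda>0:d_f(\lambda)<n\}$. $X_a$ is the ideal of order continuous elements: $x\in X_a$ iff for every sequence $0\le x^{(n)}\le|x|$ with $x^{(n)}\downarrow0$ coordinatewise one has $\|x^{(n)}\|_X\to0$. $\operatorname{dist}_X(h,X_a)=\inf\{\|h-g\|_X:g\in X_a\}$. *)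

From Stdlib Require Import Reals List.
From Coquelicot Require Import Coquelicot.
Open Scope R_scope.

(** Real sequences indexed by nat (= counting measure on N, 0-based). *)
Definition seqR := nat -> R.

Definition sadd (x y : seqR) : seqR := fun n => x n + y n.
Definition ssub (x y : seqR) : seqR := fun n => x n - y n.
Definition sscal (c : R) (x : seqR) : seqR := fun n => c * x n.

Definition atmost (k : nat) (A : nat -> Prop) : Prop :=
  exists l : list nat, (length l <= k)%nat /\ forall n, A n -> In n l.

Definition equinum (A B : nat -> Prop) : Prop :=
  exists f : nat -> nat,
    (forall n, A n -> B (f n)) /\
    (forall m n, A m -> A n -> f m = f n -> m = n) /\
    (forall m, B m -> exists n, A n /\ f n = m).

(** {n : |x_n| > lam}; its cardinality is d_x(lam). *)
Definition level_set (x : seqR) (lam : R) : nat -> Prop :=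
  fun n => Rabs (x n) > lam.

Definition equimeasurable (x y : seqR) : Prop :=
  forall lam, 0 <= lam -> equinum (level_set x lam) (level_set y lam).

Definition ncauchy (nrm : seqR -> R) (xs : nat -> seqR) : Prop :=
  forall eps, eps > 0 -> exists N, forall p q, (p >= N)%nat -> (q >= N)%nat ->
    nrm (ssub (xs p) (xs q)) < eps.

Definition banach_seq_space (X : seqR -> Prop) (nrm : seqR -> R) : Prop :=
  X (fun _ => 0) /\
  (forall x y, X x -> X y -> X (sadd x y)) /\
  (forall c x, X x -> X (sscal c x)) /\
  (forall x, X x -> 0 <= nrm x) /\
  (forall x, X x -> nrm x = 0 -> forall n, x n = 0) /\
  (forall c x, X x -> nrm (sscal c x) = Rabs c * nrm x) /\
  (forall x y, X x -> X y -> nrm (sadd x y) <= nrm x + nrm y) /\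
  (forall xs : nat -> seqR, (forall k, X (xs k)) -> ncauchy nrm xs ->
     exists x, X x /\ Un_cv (fun k => nrm (ssub (xs k) x)) 0).

Definition ri_space (X : seqR -> Prop) (nrm : seqR -> R) : Prop :=
  banach_seq_space X nrm /\
  (forall x y, X y -> (forall n, Rabs (x n) <= Rabs (y n)) -> X x /\ nrm x <= nrm y) /\
  (exists y, X y /\ forall n, y n <> 0) /\
  (forall x y, X x -> equimeasurable x y -> X y /\ nrm y = nrm x).

Definition fatou_property (X : seqR -> Prop) (nrm : seqR -> R) : Prop :=
  forall (xs : nat -> seqR) (x : seqR),
    (forall k n, 0 <= xs k n) ->
    (forall k n, xs k n <= xs (S k) n) ->
    (forall n, Un_cv (fun k => xs k n) (x n)) ->
    (forall k, X (xs k)) ->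
    (exists M, forall k, nrm (xs k) <= M) ->
    X x /\ (forall k, nrm (xs k) <= nrm (xs (S k))) /\
    Un_cv (fun k => nrm (xs k)) (nrm x).

(** Non-increasing rearrangement; (fstar f) k is f^*_{k+1} of the paper:
    f^*_{k+1} = inf {lam > 0 : d_f(lam) < k+1}. *)
Definition fstar (f : seqR) : seqR :=
  fun k => real (Glb_Rbar (fun lam => 0 < lam /\ atmost k (level_set f lam))).

Definition order_continuous (X : seqR -> Prop) (nrm : seqR -> R) (x : seqR) : Prop :=
  X x /\
  forall xs : nat -> seqR,
    (forall k n, 0 <= xs k n <= Rabs (x n)) ->
    (forall k n, xs (S k) n <= xs k n) ->
    (forall n, Un_cv (fun k => xs k n) 0) ->
    Un_cv (fun k => nrm (xs k)) 0.

Definition dist_Xa (X : seqR -> Prop) (nrm : seqR -> R) (h : seqR) : R :=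
  real (Glb_Rbar (fun r => exists g, order_continuous X nrm g /\ r = nrm (ssub h g))).

From Stdlib Require Import Reals List Lia Lra Classical ClassicalEpsilon.
From Coquelicot Require Import Coquelicot.
Open Scope R_scope.

(* On N every finitely supported sequence is order continuous and the tails of an order
   continuous sequence have norms tending to 0, so dist(h, X_a) is the infimum over k of the
   norm of the tail of h beyond k.  It remains to compare tails of f and f^*.  The tail of f^*
   beyond k is dominated in distribution by the tail of f beyond k.  Conversely, for every m,
   once the indices of (at most) m largest values of |f| are cut off, what is left of f is
   dominated in distribution by the tail of f^* beyond m; this is proved by induction on m.
   In an r.i. space domination in distribution gives domination in norm, via g^* <= h^*. *)

Definition asbool (P : Prop) : bool :=
  if excluded_middle_informative P then true else false.

Lemma asboolP (P : Prop) : asbool P = true <-> P.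
Proof.
  unfold asbool; destruct (excluded_middle_informative P); split; auto; discriminate.
Qed.

Lemma in_le_list_max (l : list nat) x : In x l -> (x <= list_max l)%nat.
Proof.
  intros Hx. exact (proj1 (Forall_forall _ l) (proj1 (list_max_le l _) (le_n _)) x Hx).
Qed.

Section FiniteSets.

Implicit Types (A B C : nat -> Prop).

Lemma atmost_incl A B k : (forall n, A n -> B n) -> atmost k B -> atmost k A.
Proof. intros HAB [l [Hl Hc]]; exists l; split; auto. Qed.

Lemma atmost_weaken A k k' : (k <= k')%nat -> atmost k A -> atmost k' A.
Proof. intros Hk [l [Hl Hc]]; exists l; split; auto; lia. Qed.

Lemma atmost_empty A k : (forall n, ~ A n) -> atmost k A.
Proof. intros HA; exists nil; split; [simpl; lia|]. intros n Hn; destruct (HA n Hn). Qed.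

Lemma atmost_0 A n : atmost 0 A -> ~ A n.
Proof. intros [[|m l] [Hl Hc]] Hn; [exact (Hc n Hn) | simpl in Hl; lia]. Qed.

Lemma NoDup_length_atmost A l k :
  NoDup l -> (forall x, In x l -> A x) -> atmost k A -> (length l <= k)%nat.
Proof.
  intros Hnd Hl [l' [Hl' Hc]].
  enough (length l <= length l')%nat by lia.
  apply NoDup_incl_length; auto. intros x Hx; auto.
Qed.

Lemma not_atmost_NoDup A k : ~ atmost k A ->
  exists l, NoDup l /\ (forall x, In x l -> A x) /\ length l = S k.
Proof.
  induction k as [|k IH]; intros Hk.
  - destruct (classic (exists n, A n)) as [[n Hn]|Hno].
    + exists (n :: nil). split; [repeat constructor; intros []|].
      split; [intros x [->|[]]; auto | reflexivity].
    + exfalso; apply Hk, atmost_empty; intros n Hn; eauto.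
  - destruct IH as [l [Hnd [Hl Hlen]]].
    { intros H; apply Hk; revert H; apply atmost_weaken; lia. }
    destruct (classic (exists n, A n /\ ~ In n l)) as [[n [Hn Hnl]]|Hno].
    + exists (n :: l). split; [constructor; auto|].
      split; [intros x [->|Hx]; auto | simpl; lia].
    + exfalso; apply Hk. exists l; split; [lia|].
      intros n Hn. apply NNPP; intro; eauto.
Qed.

Lemma atmost_tail_add A k j :
  atmost j (fun n => (k <= n)%nat /\ A n) -> atmost (k + j) A.
Proof.
  intros [l [Hl Hc]]. exists (seq 0 k ++ l).
  split; [rewrite length_app, length_seq; lia|].
  intros n Hn. apply in_or_app.
  destruct (Nat.lt_ge_cases n k); [left; apply in_seq; lia | right; auto].
Qed.

Lemma atmost_disjoint_sub A B C a b :
  (forall x, A x -> C x) -> (forall x, B x -> C x) -> (forall x, A x -> B x -> False) ->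
  atmost (S a + b) C -> ~ atmost a A -> atmost b B.
Proof.
  intros HAC HBC HAB [l [Hl Hc]] Ha.
  destruct (not_atmost_NoDup _ _ Ha) as [lA [HndA [HlA HlenA]]].
  exists (filter (fun x => negb (asbool (A x))) l). split.
  - enough (length lA <= length (filter (fun x => asbool (A x)) l))%nat
      by (pose proof (filter_length (fun x => asbool (A x)) l); lia).
    apply NoDup_incl_length; auto. intros x Hx.
    apply filter_In; split; [apply Hc, HAC|apply asboolP]; auto.
  - intros x Hx. apply filter_In; split; auto.
    destruct (asbool (A x)) eqn:E; auto.
    destruct (HAB x (proj1 (asboolP _) E) Hx).
Qed.

End FiniteSets.

Fixpoint count_lt (A : nat -> Prop) (n : nat) : nat :=
  match n with
  | O => O
  | S n => (count_lt A n + if asbool (A n) then 1 else 0)%nat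
  end.

Definition list_lt (A : nat -> Prop) (n : nat) : list nat :=
  filter (fun x => asbool (A x)) (seq 0 n).

Lemma length_list_lt A n : length (list_lt A n) = count_lt A n.
Proof.
  induction n as [|n IH]; [reflexivity|]. unfold list_lt in *.
  rewrite seq_S, filter_app, length_app, IH; simpl.
  destruct (asbool (A n)); simpl; lia.
Qed.

Lemma list_lt_NoDup A n : NoDup (list_lt A n).
Proof. apply NoDup_filter, seq_NoDup. Qed.

Lemma in_list_lt A n x : In x (list_lt A n) <-> (x < n)%nat /\ A x.
Proof.
  unfold list_lt. rewrite filter_In, in_seq, asboolP.
  split; intros [H1 H2]; split; auto; lia.
Qed.

Lemma count_lt_mono A m n : (m <= n)%nat -> (count_lt A m <= count_lt A n)%nat.
Proof. induction 1; simpl; lia. Qed.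

Lemma count_lt_S A n : A n -> count_lt A (S n) = S (count_lt A n).
Proof. intros Hn; simpl; rewrite (proj2 (asboolP _) Hn); lia. Qed.

Lemma count_lt_hit A j N : (j < count_lt A N)%nat -> exists n, A n /\ count_lt A n = j.
Proof.
  induction N as [|N IH]; simpl; [lia|]. intros Hj.
  destruct (Nat.lt_ge_cases j (count_lt A N)) as [Hlt|Hge]; auto.
  destruct (asbool (A N)) eqn:E; [|lia].
  exists N; split; [apply asboolP; auto | lia].
Qed.

Lemma equinum_ext (A A' B B' : nat -> Prop) :
  (forall n, A n <-> A' n) -> (forall n, B n <-> B' n) -> equinum A B -> equinum A' B'.
Proof.
  intros HA HB [g [Hmap [Hinj Hsurj]]]. exists g. split; [|split].
  - intros n Hn; apply HB, Hmap, HA; auto.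
  - intros m n Hm Hn; apply Hinj; apply HA; auto.
  - intros m Hm. destruct (Hsurj m (proj2 (HB m) Hm)) as [n [Hn Hgn]].
    exists n; split; auto; apply HA; auto.
Qed.

Lemma equinum_sym (A B : nat -> Prop) : equinum A B -> equinum B A.
Proof.
  intros [g [Hmap [Hinj Hsurj]]].
  set (h := fun m => match excluded_middle_informative (exists n, A n /\ g n = m) with
                     | left H => proj1_sig (constructive_indefinite_description _ H)
                     | right _ => O end).
  assert (Hh : forall m, B m -> A (h m) /\ g (h m) = m).
  { intros m Hm. unfold h. destruct (excluded_middle_informative _) as [H|H].
    - exact (proj2_sig (constructive_indefinite_description _ H)).
    - destruct (H (Hsurj m Hm)). }
  exists h. split; [|split].
  - intros m Hm; apply Hh; auto.
  - intros m n Hm Hn Heq.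
    rewrite <- (proj2 (Hh m Hm)), <- (proj2 (Hh n Hn)), Heq; reflexivity.
  - intros m Hm. exists (g m). split; [apply Hmap; auto|].
    destruct (Hh (g m) (Hmap m Hm)) as [Ha Hg]. apply Hinj; auto.
Qed.

(* [fun i => ~ atmost i A] is the initial segment of N of size #A; each element of A is sent
   to its rank. *)
Lemma equinum_count_lt (A : nat -> Prop) : equinum A (fun i => ~ atmost i A).
Proof.
  exists (count_lt A). split; [|split].
  - intros n Hn Hat.
    enough (length (list_lt A (S n)) <= count_lt A n)%nat
      by (rewrite length_list_lt, count_lt_S in *; auto; lia).
    apply (NoDup_length_atmost A); auto; [apply list_lt_NoDup|].
    intros x Hx; apply in_list_lt in Hx; tauto.
  - intros m n Hm Hn Heq.
    destruct (Nat.lt_trichotomy m n) as [Hlt|[Heq'|Hlt]]; auto; exfalso.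
    + pose proof (count_lt_mono A (S m) n Hlt). rewrite count_lt_S in *; auto; lia.
    + pose proof (count_lt_mono A (S n) m Hlt). rewrite count_lt_S in *; auto; lia.
  - intros j Hj. destruct (not_atmost_NoDup _ _ Hj) as [l [Hnd [Hl Hlen]]].
    apply (count_lt_hit A j (S (list_max l))).
    rewrite <- length_list_lt.
    enough (length l <= length (list_lt A (S (list_max l))))%nat by lia.
    apply NoDup_incl_length; auto. intros x Hx.
    apply in_list_lt; split; auto. pose proof (in_le_list_max l x Hx); lia.
Qed.

Lemma finite_gap_below (g : nat -> R) (P : nat -> Prop) l v :
  (forall x, P x -> In x l) -> (forall x, P x -> g x < v) ->
  exists mu, mu < v /\ forall x, P x -> g x < mu.
Proof.
  revert P; induction l as [|a l IH]; intros P Hl Hg.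
  - exists (v - 1). split; [lra|]. intros x Hx; destruct (Hl x Hx).
  - destruct (IH (fun x => P x /\ x <> a)) as [mu [Hmu Hlt]].
    + intros x [Hx Hxa]. destruct (Hl x Hx); auto; congruence.
    + intros x [Hx _]; auto.
    + destruct (classic (P a)) as [Pa|Pa].
      * exists (Rmax mu ((g a + v) / 2)). pose proof (Hg a Pa).
        split; [apply Rmax_lub_lt; lra|].
        intros x Hx. destruct (Nat.eq_dec x a) as [->|Hxa].
        -- pose proof (Rmax_r mu ((g a + v) / 2)); lra.
        -- pose proof (Hlt x (conj Hx Hxa)); pose proof (Rmax_l mu ((g a + v) / 2)); lra.
      * exists mu; split; auto. intros x Hx; apply Hlt; split; auto; congruence.
Qed.

Lemma finite_gap_above (g : nat -> R) (P : nat -> Prop) l v :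
  (forall x, P x -> In x l) -> (forall x, P x -> v < g x) ->
  exists mu, v < mu /\ forall x, P x -> mu < g x.
Proof.
  intros Hl Hg. destruct (finite_gap_below (fun x => - g x) P l (- v) Hl) as [mu [Hmu Hlt]].
  { intros x Hx; specialize (Hg x Hx); lra. }
  exists (- mu); split; [lra|]. intros x Hx; specialize (Hlt x Hx); lra.
Qed.

Lemma Glb_Rbar_nonneg_spec (E : R -> Prop) :
  (exists s, E s) -> (forall s, E s -> 0 <= s) ->
  0 <= real (Glb_Rbar E) /\ (forall s, E s -> real (Glb_Rbar E) <= s) /\
  (forall b, (forall s, E s -> b <= s) -> b <= real (Glb_Rbar E)).
Proof.
  intros [s0 Hs0] Hpos. destruct (Glb_Rbar_correct E) as [Hlb Hglb].
  assert (H0 : Rbar_le 0 (Glb_Rbar E)) by (apply Hglb; intros x Hx; apply Hpos; auto).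
  pose proof (Hlb s0 Hs0) as Hs0'.
  destruct (Glb_Rbar E) as [g| |]; simpl in *; try contradiction.
  split; [auto|]. split; [exact Hlb|]. intros b Hb; exact (Hglb b Hb).
Qed.

Definition tail (k : nat) (x : seqR) : seqR := fun n => if Nat.leb k n then x n else 0.
Definition head (k : nat) (x : seqR) : seqR := fun n => if Nat.leb k n then 0 else x n.

Lemma abs_tail_le k x n : Rabs (tail k x n) <= Rabs (x n).
Proof.
  unfold tail; destruct (Nat.leb k n); [lra|]. rewrite Rabs_R0; apply Rabs_pos.
Qed.

Definition vanish_on (T : list nat) (x : seqR) : seqR :=
  fun n => if in_dec Nat.eq_dec n T then 0 else x n.

Lemma level_set_tail k x lam n : 0 <= lam ->
  (level_set (tail k x) lam n <-> (k <= n)%nat /\ level_set x lam n).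
Proof.
  unfold level_set, tail. intros Hlam. destruct (Nat.leb k n) eqn:E.
  - apply Nat.leb_le in E; tauto.
  - apply Nat.leb_gt in E. rewrite Rabs_R0. split; [lra | intros [H _]; lia].
Qed.

Lemma level_set_vanish_on T x lam n : 0 <= lam ->
  (level_set (vanish_on T x) lam n <-> level_set x lam n /\ ~ In n T).
Proof.
  unfold level_set, vanish_on. intros Hlam. destruct (in_dec Nat.eq_dec n T).
  - rewrite Rabs_R0. split; [lra | tauto].
  - tauto.
Qed.

(* [atmost j (level_set h lam)] says d_h(lam) <= j, so this is d_g <= d_h. *)
Definition distribution_le (g h : seqR) : Prop :=
  forall lam, 0 <= lam -> forall j, atmost j (level_set h lam) -> atmost j (level_set g lam).

Lemma distribution_le_abs (g g' h : seqR) :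
  (forall n, Rabs (g n) <= Rabs (g' n)) -> distribution_le g' h -> distribution_le g h.
Proof.
  intros Hgg' Hg' lam Hlam j Hat. apply (atmost_incl _ (level_set g' lam)); [|auto].
  unfold level_set; intros n Hn; specialize (Hgg' n); lra.
Qed.

Section Rearrangement.

Variable f : seqR.
Hypothesis f_bounded : exists B, forall n, Rabs (f n) <= B.

Lemma fstar_glb i :
  0 <= fstar f i /\
  (forall lam, 0 < lam -> atmost i (level_set f lam) -> fstar f i <= lam) /\
  (forall b, (forall lam, 0 < lam -> atmost i (level_set f lam) -> b <= lam) ->
     b <= fstar f i).
Proof.
  destruct f_bounded as [B HB].
  destruct (Glb_Rbar_nonneg_spec (fun lam => 0 < lam /\ atmost i (level_set f lam)))
    as [H0 [Hlb Hglb]].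
  - exists (Rmax B 0 + 1). split; [pose proof (Rmax_r B 0); lra|].
    apply atmost_empty; unfold level_set; intros n Hn.
    pose proof (HB n); pose proof (Rmax_l B 0); lra.
  - intros s [Hs _]; lra.
  - split; [exact H0|]. split.
    + intros lam Hlam Hat; apply Hlb; auto.
    + intros b Hb; apply Hglb; intros s [Hs Hat]; auto.
Qed.

Lemma fstar_ge0 i : 0 <= fstar f i.
Proof. exact (proj1 (fstar_glb i)). Qed.

Lemma fstar_gt_iff i lam : 0 <= lam ->
  (lam < fstar f i <-> ~ atmost i (level_set f lam)).
Proof.
  intros Hlam. destruct (fstar_glb i) as [_ [Hlb Hglb]]. split.
  - intros Hgt Hat.
    enough (fstar f i <= (lam + fstar f i) / 2) by lra.
    apply Hlb; [lra|]. revert Hat; apply atmost_incl.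
    unfold level_set; intros n; lra.
  - intros Hna. destruct (not_atmost_NoDup _ _ Hna) as [l [Hnd [Hl Hlen]]].
    destruct (finite_gap_above (fun n => Rabs (f n)) (fun n => In n l) l lam)
      as [mu [Hmu Hmul]]; auto.
    apply Rlt_le_trans with mu; auto. apply Hglb. intros s Hs Hat.
    apply Rnot_lt_le; intros Hsmu.
    enough (length l <= i)%nat by lia.
    apply (NoDup_length_atmost (level_set f s) l i Hnd); auto.
    intros x Hx; specialize (Hmul x Hx); unfold level_set; simpl in Hmul; lra.
Qed.

Lemma fstar_antitone m i : (m <= i)%nat -> fstar f i <= fstar f m.
Proof.
  intros Hmi. apply Rnot_gt_le; intros Hc.
  set (lam := (fstar f i + fstar f m) / 2).
  assert (Hlam : 0 <= lam) by (pose proof (fstar_ge0 m); unfold lam; lra).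
  apply (proj1 (fstar_gt_iff i lam Hlam)); [unfold lam; lra|].
  apply (atmost_weaken _ m); auto. apply NNPP.
  rewrite <- (fstar_gt_iff m lam Hlam). unfold lam; lra.
Qed.

Lemma level_set_fstar lam i : level_set (fstar f) lam i <-> lam < fstar f i.
Proof.
  unfold level_set. rewrite Rabs_right by (apply Rle_ge, fstar_ge0). reflexivity.
Qed.

Lemma equimeasurable_fstar : equimeasurable f (fstar f) /\ equimeasurable (fstar f) f.
Proof.
  assert (Heq : forall lam, 0 <= lam -> equinum (level_set f lam) (level_set (fstar f) lam)).
  { intros lam Hlam.
    apply (equinum_ext _ _ (fun i => ~ atmost i (level_set f lam)) _ (fun n => iff_refl _));
      [|apply equinum_count_lt].
    intros i. rewrite level_set_fstar, fstar_gt_iff; auto. reflexivity. }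
  split; intros lam Hlam; [|apply equinum_sym]; auto.
Qed.

Lemma atmost_tail_fstar_iff m j lam : 0 <= lam ->
  (atmost j (level_set (tail m (fstar f)) lam) <-> atmost (m + j) (level_set f lam)).
Proof.
  intros Hlam.
  assert (Hlvl : forall i, level_set (tail m (fstar f)) lam i <->
                           (m <= i)%nat /\ ~ atmost i (level_set f lam)).
  { intros i. rewrite level_set_tail, level_set_fstar, fstar_gt_iff; auto. reflexivity. }
  split.
  - intros Hat. apply NNPP; intros Hna.
    enough (length (seq m (S j)) <= j)%nat by (rewrite length_seq in *; lia).
    apply (NoDup_length_atmost (level_set (tail m (fstar f)) lam) _ _ (seq_NoDup _ _)); auto.
    intros i Hi; apply in_seq in Hi; apply Hlvl. split; [lia|].
    intros Hat'; apply Hna; revert Hat'; apply atmost_weaken; lia.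
  - intros Hat. exists (seq m j). split; [rewrite length_seq; lia|].
    intros i Hi. apply Hlvl in Hi as [Hmi Hna]. apply in_seq.
    split; [lia|]. apply Nat.nle_gt; intros Hge.
    apply Hna; revert Hat; apply atmost_weaken; lia.
Qed.

Lemma tail_fstar_distribution_le k : distribution_le (tail k (fstar f)) (tail k f).
Proof.
  intros lam Hlam j Hat. apply atmost_tail_fstar_iff; auto.
  apply atmost_tail_add. revert Hat; apply atmost_incl.
  intros n Hn; apply level_set_tail; auto.
Qed.

Section CutOffStep.

Variables (m : nat) (T : list nat).
Hypothesis HT : distribution_le (vanish_on T f) (tail m (fstar f)).

Lemma in_cut_of_level_set lam n :
  0 <= lam -> fstar f m <= lam -> level_set f lam n -> In n T.
Proof.
  intros Hlam Hle Hn. apply NNPP; intros HnT.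
  refine (atmost_0 _ n (HT lam Hlam 0%nat _) _); [|apply level_set_vanish_on; auto].
  apply atmost_empty; intros i Hi. apply level_set_tail in Hi as [Hmi Hi]; auto.
  apply level_set_fstar in Hi. pose proof (fstar_antitone m i Hmi); lra.
Qed.

Lemma atmost_vanish_on_above T' lam j : incl T T' -> 0 <= lam -> fstar f m <= lam ->
  atmost j (level_set (vanish_on T' f) lam).
Proof.
  intros HTT' Hlam Hle. apply atmost_empty; intros n Hn.
  apply level_set_vanish_on in Hn as [Hn HnT']; auto.
  apply HnT', HTT'. exact (in_cut_of_level_set lam n Hlam Hle Hn).
Qed.

Lemma atmost_vanish_on_below lam j : 0 <= lam -> lam < fstar f m ->
  atmost j (level_set (tail (S m) (fstar f)) lam) ->
  atmost (S j) (level_set (vanish_on T f) lam).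
Proof.
  intros Hlam Hlt Hat. apply HT; auto.
  rewrite atmost_tail_fstar_iff in *; auto. rewrite <- Nat.add_succ_comm; auto.
Qed.

Lemma vanish_on_cons_distribution_le t : ~ In t T -> fstar f m <= Rabs (f t) ->
  distribution_le (vanish_on (t :: T) f) (tail (S m) (fstar f)).
Proof.
  intros HtT Ht lam Hlam j Hat. destruct (Rle_or_lt (fstar f m) lam) as [Hle|Hlt].
  - apply atmost_vanish_on_above; auto. apply incl_tl, incl_refl.
  - apply (atmost_disjoint_sub (fun n => n = t) _ (level_set (vanish_on T f) lam) 0 j);
      [| | |apply atmost_vanish_on_below; auto|intros H0; exact (atmost_0 _ t H0 eq_refl)];
      intros x; rewrite ?level_set_vanish_on; auto; simpl.
    + intros ->; split; [unfold level_set; lra|auto].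
    + tauto.
    + intros -> [_ Hx]; tauto.
Qed.

(* Off [T] the values of [f] above [lam] are finitely many and below [fstar f m], so they
   stay below some [mu < fstar f m]; more than [m] values of [f] exceed [mu]. *)
Lemma vanish_on_distribution_le_S : (forall t, ~ In t T -> Rabs (f t) < fstar f m) ->
  distribution_le (vanish_on T f) (tail (S m) (fstar f)).
Proof.
  intros Hoff lam Hlam j Hat. destruct (Rle_or_lt (fstar f m) lam) as [Hle|Hlt].
  { apply atmost_vanish_on_above; auto. apply incl_refl. }
  destruct (atmost_vanish_on_below lam j Hlam Hlt Hat) as [l [_ Hl]].
  destruct (finite_gap_below (fun n => Rabs (f n)) _ l (fstar f m) Hl) as [mu0 [Hmu0 Hbelow]].
  { intros n Hn; apply level_set_vanish_on in Hn as [_ HnT]; auto. }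
  set (mu := Rmax mu0 lam).
  assert (Hmu : lam <= mu /\ mu0 <= mu /\ mu < fstar f m)
    by (unfold mu; split; [apply Rmax_r|split; [apply Rmax_l|apply Rmax_lub_lt; auto]]).
  apply (atmost_disjoint_sub (level_set f mu) _ (level_set f lam) m j).
  - unfold level_set; intros n; lra.
  - intros n Hn; apply level_set_vanish_on in Hn; tauto.
  - intros n Hn Hn'. specialize (Hbelow n Hn'). unfold level_set in Hn; simpl in Hbelow; lra.
  - apply atmost_tail_fstar_iff; auto.
  - apply fstar_gt_iff; lra.
Qed.

End CutOffStep.

Lemma exists_vanish_on_distribution_le m :
  exists T, distribution_le (vanish_on T f) (tail m (fstar f)).
Proof.
  induction m as [|m [T HT]].
  - exists nil. intros lam Hlam j Hat.
    apply (atmost_tail_fstar_iff 0 j lam Hlam) in Hat. revert Hat; apply atmost_incl.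
    intros n Hn; apply level_set_vanish_on in Hn; tauto.
  - destruct (classic (exists t, ~ In t T /\ fstar f m <= Rabs (f t)))
      as [[t [HtT Ht]]|Hno].
    + exists (t :: T); apply vanish_on_cons_distribution_le; auto.
    + exists T; apply vanish_on_distribution_le_S; auto.
      intros t HtT; apply Rnot_le_lt; intros Ht; eauto.
Qed.

Lemma tail_distribution_le_tail_fstar m :
  exists k, distribution_le (tail k f) (tail m (fstar f)).
Proof.
  destruct (exists_vanish_on_distribution_le m) as [T HT]. exists (S (list_max T)).
  apply (distribution_le_abs _ (vanish_on T f)); auto.
  intros n. unfold tail, vanish_on. destruct (in_dec Nat.eq_dec n T) as [HnT|HnT].
  - apply in_le_list_max in HnT.
    replace (Nat.leb (S (list_max T)) n) with false by (symmetry; apply Nat.leb_gt; lia).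
    lra.
  - destruct (Nat.leb _ n); [lra|]. rewrite Rabs_R0; apply Rabs_pos.
Qed.

End Rearrangement.

Lemma fstar_le_of_distribution_le (g h : seqR) :
  (exists B, forall n, Rabs (g n) <= B) -> (exists B, forall n, Rabs (h n) <= B) ->
  distribution_le g h -> forall i, fstar g i <= fstar h i.
Proof.
  intros Hg Hh Hgh i. apply Rnot_gt_le; intros Hc.
  set (lam := (fstar g i + fstar h i) / 2).
  assert (Hlam : 0 <= lam) by (pose proof (fstar_ge0 h Hh i); unfold lam; lra).
  apply (proj1 (fstar_gt_iff g Hg i lam Hlam)); [unfold lam; lra|].
  apply Hgh; auto. apply NNPP. rewrite <- (fstar_gt_iff h Hh i lam Hlam). unfold lam; lra.
Qed.

Definition unit_seq (n : nat) : seqR := fun m => if Nat.eqb m n then 1 else 0.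

Fixpoint sum_lt (a : nat -> R) (k : nat) : R :=
  match k with O => 0 | S k => sum_lt a k + a k end.

Lemma sum_lt_ge0 (a : nat -> R) k : (forall n, 0 <= a n) -> 0 <= sum_lt a k.
Proof. intros Ha; induction k as [|k IH]; simpl; [lra|]. pose proof (Ha k); lra. Qed.

Lemma le_sum_lt (a : nat -> R) k n : (forall m, 0 <= a m) -> (n < k)%nat -> a n <= sum_lt a k.
Proof.
  intros Ha; induction k as [|k IH]; simpl; intros Hnk; [lia|].
  pose proof (sum_lt_ge0 a k Ha). pose proof (Ha k).
  destruct (Nat.eq_dec n k) as [->|Hne]; [lra|]. pose proof (IH ltac:(lia)); lra.
Qed.

Lemma is_lim_seq_sum_lt (a : nat -> nat -> R) k :
  (forall n, is_lim_seq (fun j => a j n) 0) -> is_lim_seq (fun j => sum_lt (a j) k) 0.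
Proof.
  intros Ha. induction k as [|k IH]; simpl; [apply is_lim_seq_const|].
  replace (Finite 0) with (Finite (0 + 0)) by (f_equal; ring).
  apply is_lim_seq_plus'; auto.
Qed.

Section RISpace.

Variables (X : seqR -> Prop) (nrm : seqR -> R).
Hypothesis HX : ri_space X nrm.

Lemma ri_ideal x y : X y -> (forall n, Rabs (x n) <= Rabs (y n)) -> X x /\ nrm x <= nrm y.
Proof. apply HX. Qed.

Lemma ri_norm_ge0 x : X x -> 0 <= nrm x.
Proof. apply HX. Qed.

Lemma ri_equimeasurable x y : X x -> equimeasurable x y -> X y /\ nrm y = nrm x.
Proof. apply HX. Qed.

Lemma ri_add x y : X x -> X y -> X (sadd x y) /\ nrm (sadd x y) <= nrm x + nrm y.
Proof. destruct HX as [[_ [Hadd [_ [_ [_ [_ [Htri _]]]]]]] _]. auto. Qed.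

Lemma ri_scal c x : X x -> X (sscal c x) /\ nrm (sscal c x) = Rabs c * nrm x.
Proof. destruct HX as [[_ [_ [Hscal [_ [_ [Hhom _]]]]]] _]. auto. Qed.

Lemma ri_abs_eq x y : X y -> (forall n, Rabs (x n) = Rabs (y n)) -> X x /\ nrm x = nrm y.
Proof.
  intros Hy Hxy. destruct (ri_ideal x y Hy) as [Hx Hle]; [intros n; rewrite Hxy; lra|].
  destruct (ri_ideal y x Hx) as [_ Hge]; [intros n; rewrite Hxy; lra|].
  split; [auto|lra].
Qed.

Lemma ri_sub x y : X x -> X y -> X (ssub x y) /\ nrm (ssub x y) <= nrm x + nrm y.
Proof.
  intros Hx Hy. destruct (ri_scal (-1) y Hy) as [Hs Hsn].
  destruct (ri_add x _ Hx Hs) as [Ha Han].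
  destruct (ri_abs_eq (ssub x y) _ Ha) as [Hxy Heq].
  { intros n; unfold ssub, sadd, sscal. f_equal; ring. }
  rewrite Hsn, Rabs_m1, Rmult_1_l in Han. split; [auto|lra].
Qed.

Lemma ri_tail k x : X x -> X (tail k x).
Proof. intros Hx. exact (proj1 (ri_ideal _ x Hx (abs_tail_le k x))). Qed.

Lemma ri_head k x : X x -> X (head k x).
Proof.
  intros Hx. apply (ri_ideal _ x Hx).
  intros n; unfold head; destruct (Nat.leb k n); [|lra]. rewrite Rabs_R0; apply Rabs_pos.
Qed.

Lemma unit_seq_0 : X (unit_seq 0) /\ 0 < nrm (unit_seq 0).
Proof.
  destruct HX as [[_ [_ [_ [_ [Hdef _]]]]] [_ [[y [Hy Hy0]] _]]].
  assert (Hpos : 0 < Rabs (y 0%nat)) by (apply Rabs_pos_lt; auto).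
  destruct (ri_scal (/ Rabs (y 0%nat)) y Hy) as [Hs _].
  destruct (ri_ideal (unit_seq 0) _ Hs) as [He _].
  { intros n. unfold unit_seq, sscal. destruct (Nat.eqb n 0) eqn:E.
    - apply Nat.eqb_eq in E; subst.
      rewrite Rabs_mult, Rabs_inv, Rabs_Rabsolu, Rinv_l, Rabs_R1 by lra. lra.
    - rewrite Rabs_R0. apply Rabs_pos. }
  split; [auto|]. destruct (Rle_lt_or_eq_dec _ _ (ri_norm_ge0 _ He)) as [|Heq]; auto.
  exfalso. pose proof (Hdef _ He (eq_sym Heq) 0%nat). unfold unit_seq in *; simpl in *; lra.
Qed.

Lemma unit_seq_in n : X (unit_seq n) /\ nrm (unit_seq n) = nrm (unit_seq 0).
Proof.
  apply ri_equimeasurable; [apply unit_seq_0|].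
  intros lam Hlam. exists (fun _ => n). unfold level_set, unit_seq. split; [|split].
  - intros m Hm. rewrite Nat.eqb_refl.
    destruct (Nat.eqb m 0); rewrite ?Rabs_R0 in *; lra.
  - intros a b Ha Hb _.
    destruct (Nat.eqb a 0) eqn:Ea; [|rewrite Rabs_R0 in Ha; lra].
    destruct (Nat.eqb b 0) eqn:Eb; [|rewrite Rabs_R0 in Hb; lra].
    apply Nat.eqb_eq in Ea, Eb; lia.
  - intros m Hm. destruct (Nat.eqb m n) eqn:E; [|rewrite Rabs_R0 in Hm; lra].
    apply Nat.eqb_eq in E. exists 0%nat. simpl. split; auto.
Qed.

Lemma ri_bounded x : X x -> exists B, forall n, Rabs (x n) <= B.
Proof.
  intros Hx. destruct unit_seq_0 as [_ Hpos]. exists (nrm x / nrm (unit_seq 0)). intros n.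
  destruct (unit_seq_in n) as [He Hen].
  destruct (ri_scal (x n) (unit_seq n) He) as [_ Hsn].
  destruct (ri_ideal (sscal (x n) (unit_seq n)) x Hx) as [_ Hle].
  { intros m. unfold sscal, unit_seq. destruct (Nat.eqb m n) eqn:E.
    - apply Nat.eqb_eq in E; subst. rewrite Rmult_1_r; lra.
    - rewrite Rmult_0_r, Rabs_R0. apply Rabs_pos. }
  rewrite Hsn, Hen in Hle. apply Rmult_le_reg_r with (nrm (unit_seq 0)); auto.
  unfold Rdiv; rewrite Rmult_assoc, Rinv_l by lra. lra.
Qed.

Lemma ri_fstar x : X x -> X (fstar x) /\ nrm (fstar x) = nrm x.
Proof.
  intros Hx. apply ri_equimeasurable; auto. apply equimeasurable_fstar, ri_bounded; auto.
Qed.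

Lemma ri_norm_le_of_distribution_le g h :
  X h -> distribution_le g h -> X g /\ nrm g <= nrm h.
Proof.
  intros Hh Hgh. destruct (ri_bounded h Hh) as [B HB].
  assert (Hg : forall n, Rabs (g n) <= B).
  { intros n. apply Rnot_lt_le; intros Hlt.
    pose proof (Rle_trans _ _ _ (Rabs_pos (h 0%nat)) (HB 0%nat)) as HB0.
    refine (atmost_0 _ n (Hgh B HB0 0%nat _) Hlt).
    apply atmost_empty; unfold level_set; intros m Hm; specialize (HB m); lra. }
  destruct (ri_fstar h Hh) as [Hsh Hsh'].
  destruct (ri_ideal (fstar g) (fstar h) Hsh) as [Hsg Hsg'].
  { intros i. rewrite !Rabs_right by (apply Rle_ge, fstar_ge0; eauto).
    apply fstar_le_of_distribution_le; eauto. }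
  destruct (ri_equimeasurable (fstar g) g Hsg) as [Hg' Hg'n];
    [apply equimeasurable_fstar; eauto|].
  split; [auto|lra].
Qed.

Lemma indicator_lt_in k : X (head k (fun _ => 1)).
Proof.
  induction k as [|k IH].
  - destruct unit_seq_0 as [He _]. apply (ri_ideal _ _ He).
    intros n; unfold head; simpl. rewrite Rabs_R0; apply Rabs_pos.
  - destruct (unit_seq_in k) as [He _]. destruct (ri_add _ _ IH He) as [Hsum _].
    apply (ri_ideal _ _ Hsum). intros n; unfold head, sadd, unit_seq.
    destruct (Nat.leb (S k) n) eqn:E1; [rewrite Rabs_R0; apply Rabs_pos|].
    apply Nat.leb_gt in E1. destruct (Nat.eq_dec n k) as [->|Hne].
    + rewrite Nat.eqb_refl, (proj2 (Nat.leb_le k k)) by lia. rewrite Rplus_0_l; lra.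
    + rewrite (proj2 (Nat.eqb_neq n k)), (proj2 (Nat.leb_gt k n)) by lia.
      rewrite Rplus_0_r; lra.
Qed.

(* A sequence supported in [0, k) is bounded by the sum of its entries times the indicator
   of [0, k). *)
Lemma head_order_continuous k h : X h -> order_continuous X nrm (head k h).
Proof.
  intros Hh. split; [apply ri_head; auto|]. intros xs Hxs _ Hcv.
  pose proof (indicator_lt_in k) as Hind.
  assert (Hxs0 : forall j n, 0 <= xs j n) by (intros j n; apply Hxs).
  assert (Hle : forall j, 0 <= nrm (xs j) <= sum_lt (xs j) k * nrm (head k (fun _ => 1))).
  { intros j. destruct (ri_scal (sum_lt (xs j) k) _ Hind) as [Hs Hsn].
    destruct (ri_ideal (xs j) _ Hs) as [Hxj Hxjn].
    { intros n. unfold sscal, head. specialize (Hxs j n). unfold head in Hxs.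
      rewrite (Rabs_right (xs j n)) by lra.
      destruct (Nat.leb k n) eqn:E.
      - rewrite Rabs_R0 in Hxs. rewrite Rmult_0_r, Rabs_R0; lra.
      - apply Nat.leb_gt in E. rewrite Rmult_1_r, Rabs_right by (apply Rle_ge, sum_lt_ge0; auto).
        apply le_sum_lt; auto. }
    rewrite Hsn, Rabs_right in Hxjn by (apply Rle_ge, sum_lt_ge0; auto).
    split; [apply ri_norm_ge0|]; auto. }
  apply is_lim_seq_Reals.
  apply (is_lim_seq_le_le (fun _ => 0) _ (fun j => sum_lt (xs j) k * nrm (head k (fun _ => 1))));
    [exact Hle|apply is_lim_seq_const|].
  replace (Finite 0) with (Rbar_mult 0 (nrm (head k (fun _ => 1)))) by (simpl; f_equal; ring).
  apply is_lim_seq_scal_r, is_lim_seq_sum_lt. intros n; apply is_lim_seq_Reals, Hcv.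
Qed.

Lemma tail_norm_cv0 g : order_continuous X nrm g -> Un_cv (fun k => nrm (tail k g)) 0.
Proof.
  intros [Hg Hoc].
  set (xs := fun k n => if Nat.leb k n then Rabs (g n) else 0).
  assert (Hcv : Un_cv (fun k => nrm (xs k)) 0).
  { apply Hoc.
    - intros k n; unfold xs; destruct (Nat.leb k n); split; try lra; apply Rabs_pos.
    - intros k n; unfold xs. destruct (Nat.leb (S k) n) eqn:E.
      + apply Nat.leb_le in E. rewrite (proj2 (Nat.leb_le k n)) by lia. lra.
      + destruct (Nat.leb k n); [apply Rabs_pos|lra].
    - intros n eps Heps. exists (S n). intros k Hk. unfold xs, R_dist.
      rewrite (proj2 (Nat.leb_gt k n)) by lia. rewrite Rminus_diag, Rabs_R0; lra. }
  intros eps Heps. destruct (Hcv eps Heps) as [N HN]. exists N. intros k Hk.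
  replace (nrm (tail k g)) with (nrm (xs k)); auto.
  apply ri_abs_eq; [apply ri_tail; auto|].
  intros n; unfold xs, tail. destruct (Nat.leb k n); [apply Rabs_Rabsolu|reflexivity].
Qed.

Lemma dist_Xa_spec h : X h ->
  (forall g, order_continuous X nrm g -> dist_Xa X nrm h <= nrm (ssub h g)) /\
  (forall b, (forall g, order_continuous X nrm g -> b <= nrm (ssub h g)) ->
     b <= dist_Xa X nrm h).
Proof.
  intros Hh. unfold dist_Xa.
  destruct (Glb_Rbar_nonneg_spec
              (fun r => exists g, order_continuous X nrm g /\ r = nrm (ssub h g)))
    as [_ [Hlb Hglb]].
  - exists (nrm (ssub h (head 0 h))), (head 0 h). split; auto. apply head_order_continuous; auto.
  - intros s [g [[Hg _] ->]]. apply ri_norm_ge0, ri_sub; auto.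
  - split.
    + intros g Hg. apply Hlb; eauto.
    + intros b Hb. apply Hglb. intros s [g [Hg ->]]; auto.
Qed.

Lemma dist_Xa_le_tail h k : X h -> dist_Xa X nrm h <= nrm (tail k h).
Proof.
  intros Hh. destruct (dist_Xa_spec h Hh) as [Hlb _].
  pose proof (Hlb (head k h) (head_order_continuous k h Hh)).
  pose proof (ri_tail k h Hh) as Ht.
  replace (nrm (tail k h)) with (nrm (ssub h (head k h))); auto.
  apply ri_abs_eq; auto.
  intros n; unfold ssub, head, tail. destruct (Nat.leb k n); f_equal; ring.
Qed.

Lemma norm_tail_le h g k : X h -> order_continuous X nrm g ->
  nrm (tail k h) <= nrm (ssub h g) + nrm (tail k g).
Proof.
  intros Hh [Hg _].
  destruct (ri_sub h g Hh Hg) as [Hhg _].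
  destruct (ri_add _ _ (ri_tail k _ Hhg) (ri_tail k g Hg)) as [Hsum Hsumn].
  destruct (ri_ideal _ _ Hhg (abs_tail_le k (ssub h g))) as [_ Htail].
  replace (nrm (tail k h)) with (nrm (sadd (tail k (ssub h g)) (tail k g))); [lra|].
  symmetry; apply ri_abs_eq; auto.
  intros n; unfold tail, sadd, ssub. destruct (Nat.leb k n); f_equal; ring.
Qed.

(* [dist_Xa h] is the infimum of the tail norms of [h]. *)
Lemma dist_Xa_le_of_tails h1 h2 : X h1 -> X h2 ->
  (forall m, exists k, nrm (tail k h1) <= nrm (tail m h2)) ->
  dist_Xa X nrm h1 <= dist_Xa X nrm h2.
Proof.
  intros Hh1 Hh2 Htails. apply (proj2 (dist_Xa_spec h2 Hh2)). intros g Hg.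
  assert (Hm : forall m, dist_Xa X nrm h1 <= nrm (ssub h2 g) + nrm (tail m g)).
  { intros m. destruct (Htails m) as [k Hk].
    pose proof (dist_Xa_le_tail h1 k Hh1). pose proof (norm_tail_le h2 g m Hh2 Hg). lra. }
  pose proof (is_lim_seq_le _ _ _ _ Hm (is_lim_seq_const _)
    (is_lim_seq_plus' _ _ _ _ (is_lim_seq_const (nrm (ssub h2 g)))
       (proj2 (is_lim_seq_Reals _ _) (tail_norm_cv0 g Hg)))) as Hlim.
  simpl in Hlim; lra.
Qed.

End RISpace.

(* [HF] is deliberately unused: on N rearrangement invariance suffices. *)
Theorem theorem3p6 (X : seqR -> Prop) (nrm : seqR -> R)
  (HX : ri_space X nrm) (HF : fatou_property X nrm)
  (f : seqR) (Hf : X f) :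
  dist_Xa X nrm (fstar f) = dist_Xa X nrm f.
Proof.
  pose proof (ri_bounded X nrm HX f Hf) as Hbounded.
  destruct (ri_fstar X nrm HX f Hf) as [Hfs _].
  apply Rle_antisym; apply (dist_Xa_le_of_tails X nrm HX); auto; intros m.
  - exists m. apply (ri_norm_le_of_distribution_le X nrm HX); [apply (ri_tail X nrm HX); auto|].
    apply tail_fstar_distribution_le; auto.
  - destruct (tail_distribution_le_tail_fstar f Hbounded m) as [k Hk]. exists k.
    apply (ri_norm_le_of_distribution_le X nrm HX); auto. apply (ri_tail X nrm HX); auto.
Qed.
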